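(* Let $1\leq s\leq r\leq n$ and $d=n+r+2$. For a general $n$-tuple $(A_1,\dots,A_n)\in X^{n,r,s}$, the corresponding local algebra has socle dimension $r-s+1$; equivalently $\dim_{\mathbb{K}}\bigcap_{i=1}^n\ker A_i=r-s+1$.
   Context: $\mathbb{K}$ is algebraically closed of characteristic zero. $X^{n,r,s}$ is the set of $n$-tuples $(A_1,\dots,A_n)$ of pairwise commuting $d\times d$ matrices over $\mathbb{K}$ for which there is a basis of $\mathbb{K}^d$ in which each $A_i$ has the block form $$A_i=\begin{bmatrix}0 & b_i^T & c_i^T & 0\\ 0&0&D_i&0\\ 0&0&0&f_i\\ 0&0&0&0\end{bmatrix}$$ with diagonal blocks of sizes $1,r,n,1$, where $b_i\in\mathbb{K}^r$, $c_i,f_i\in\mathbb{K}^n$, $D_i\in\mathbb{K}^{r\times n}$, such that $f_1,\dots,f_n$ are linearly independent, $\bigcap_i\ker D_i^T=0$, and $\dim\operatorname{Span}\{b_1,\dots,b_n\}=s$. Such a tuple has a cyclic vector $v$ (the last basis vector) and corresponds to the local algebra $R/I$, $R=\mathbb{K}[\alpha_1,\dots,\alpha_n]$, where $I$ is the kernel of $f\mapsto f(A_1,\dots,A_n)v$; its socle dimension equals $\dim\bigcap_i\ker A_i$. ''General'' means: for all tuples in a nonempty open subset of $X^{n,r,s}$. *)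

From HB Require Import structures.
From mathcomp Require Import all_boot all_order all_algebra.
From mathcomp Require Import mpoly.
From mathcomp Require Import zify.
Set Implicit Arguments. Unset Strict Implicit. Unset Printing Implicit Defensive.
Import Order.TTheory GRing.Theory Num.Theory.
Local Open Scope ring_scope.

(* Dimension bookkeeping: blocks of sizes 1, r, n, 1, so d = n + r + 2. *)
Lemma blk_dimE (n r : nat) : (1 + (r + (n + 1)) = n + r + 2)%N.
Proof. lia. Qed.

(* The block matrix
     [ 0  b^T  c^T  0 ]
     [ 0   0    D   0 ]
     [ 0   0    0   f ]
     [ 0   0    0   0 ]
   with diagonal blocks of sizes 1, r, n, 1, viewed as a (n+r+2)x(n+r+2) matrix. *)
Definition blockform (K : nzRingType) (n r : nat)
  (b : 'cV[K]_r) (c f : 'cV[K]_n) (D : 'M[K]_(r, n)) : 'M[K]_(n + r + 2) :=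
  castmx (blk_dimE n r, blk_dimE n r)
    (block_mx (0 : 'M[K]_1) (row_mx b^T (row_mx c^T (0 : 'M[K]_1)))
              (0 : 'M[K]_(r + (n + 1), 1))
              (block_mx (0 : 'M[K]_r) (row_mx D (0 : 'M[K]_(r, 1)))
                        (0 : 'M[K]_(n + 1, r))
                        (block_mx (0 : 'M[K]_n) f (0 : 'M[K]_(1, n)) (0 : 'M[K]_1)))).

(* The variety X^{n,r,s}: n-tuples of pairwise commuting (n+r+2)x(n+r+2) matrices
   which, in some basis (columns of an invertible P), have the above block form with
   f_1..f_n linearly independent, /\_i ker D_i^T = 0, dim Span{b_i} = s. *)
Definition in_X (K : fieldType) (n r s : nat) (A : 'I_n -> 'M[K]_(n + r + 2)) : Prop :=
  (forall i j, A i *m A j = A j *m A i) /\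
  exists (P : 'M[K]_(n + r + 2)) (b : 'I_n -> 'cV[K]_r) (c f : 'I_n -> 'cV[K]_n)
         (D : 'I_n -> 'M[K]_(r, n)),
    [/\ P \in unitmx,
        forall i, invmx P *m A i *m P = blockform (b i) (c i) (f i) (D i),
        row_free (\matrix_(i < n) (f i)^T),
        (forall v : 'cV[K]_r, (forall i, (D i)^T *m v = 0) -> v = 0)
      & \rank (\matrix_(i < n) (b i)^T) = s].

Definition tuple_coords (K : Type) (n d : nat) (A : 'I_n -> 'M[K]_d)
  : 'I_#|{: 'I_n * 'I_d * 'I_d}| -> K :=
  fun k => let: (i, a, b) := enum_val k in A i a b.

(* A property holds for a general point of a subset X of (M_d(K))^n if it holds on
   a nonempty (Zariski-)open subset of X, i.e. on X \ V(S) for a finite set S of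
   polynomials in the matrix entries, with X \ V(S) nonempty. *)
Definition general (K : fieldType) (n d : nat)
  (X : ('I_n -> 'M[K]_d) -> Prop) (Q : ('I_n -> 'M[K]_d) -> Prop) : Prop :=
  exists S : seq {mpoly K[#|{: 'I_n * 'I_d * 'I_d}|]},
    (exists A, X A /\ has (fun p => p.@[tuple_coords A] != 0) S) /\
    (forall A, X A -> has (fun p => p.@[tuple_coords A] != 0) S -> Q A).

(* dim_K of the common kernel /\_i ker A_i (kernels of A_i acting on column vectors). *)
Definition common_ker_dim (K : fieldType) (n d : nat) (A : 'I_n -> 'M[K]_d) : nat :=
  \rank (\bigcap_(i < n) kermx (A i)^T)%MS.

From mathcomp Require Import all_boot all_order all_algebra.
From mathcomp Require Import mpoly.
Set Implicit Arguments. Unset Strict Implicit. Unset Printing Implicit Defensive.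
Import GRing.Theory.
Local Open Scope ring_scope.

(* In a basis adapting A to the block form, the common kernel contains the first
   basis vector and every (0, y, 0, 0) with y orthogonal to all b_i, a space of
   dimension 1 + (r - s); so the common kernel is never smaller than that.
   Conversely, the common kernel is the kernel of the matrix stacking the A_i, so
   its dimension is upper semicontinuous in the entries: it does not exceed its
   value at a fixed tuple A0 off the zero set of a suitable minor.  For A0 take
   b_i = e_i (i < s), c_i = e_i (i >= r), f_i = e_i, D_i = e_i e_i^T, whose
   common kernel has dimension exactly 1 + (r - s). *)

Lemma mulmx_castmx (R : pzRingType) m m' p p' q q' (e0 : m = m') (e1 : p = p')
    (e2 : q = q') (A : 'M[R]_(m, p)) (B : 'M[R]_(p, q)) :
  castmx (e0, e1) A *m castmx (e1, e2) B = castmx (e0, e2) (A *m B).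
Proof. by case: m' / e0; case: p' / e1; case: q' / e2. Qed.

Lemma castmx_eq0 (R : pzRingType) m m' p p' (e1 : m = m') (e2 : p = p')
    (A : 'M[R]_(m, p)) :
  (castmx (e1, e2) A == 0) = (A == 0).
Proof. by case: m' / e1; case: p' / e2. Qed.

Lemma mxrank_castmx (F : fieldType) m m' p p' (e1 : m = m') (e2 : p = p')
    (A : 'M[F]_(m, p)) :
  \rank (castmx (e1, e2) A) = \rank A.
Proof. by case: m' / e1; case: p' / e2. Qed.

Lemma mulmx_cols_eq0 (R : pzRingType) m n r (Y : 'M[R]_(m, r))
    (b : 'I_n -> 'cV[R]_r) :
  Y *m (\matrix_(i < n) (b i)^T)^T = 0 <-> forall i, Y *m b i = 0.
Proof.
have entryE p i : (Y *m (\matrix_(i < n) (b i)^T)^T) p i = (Y *m b i) p 0.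
  by rewrite !mxE; apply: eq_bigr => a _; rewrite !mxE.
split=> [Yb0 i | Yb0]; apply/matrixP => p j; last by rewrite entryE Yb0 !mxE.
by rewrite [j]ord1 -entryE Yb0 !mxE.
Qed.

Section StandardBasis.
Context {K : fieldType} {m : nat}.

(* Indexed by a nat so that one index can address spaces of different
   dimensions; [ecol i] is 0 when [i >= m]. *)
Definition ecol (i : nat) : 'cV[K]_m := \col_a (a == i :> nat)%:R.

Lemma mulmx_ecol p (M : 'M[K]_(p, m)) (a : 'I_m) : M *m ecol a = col a M.
Proof.
by rewrite colE; congr (_ *m _); apply/matrixP => i j; rewrite !mxE [j]ord1 eqxx andbT.
Qed.

Lemma tr_ecol_mul_ecol (a : 'I_m) : (ecol a)^T *m ecol a = 1%:M.
Proof. by rewrite mulmx_ecol; apply/matrixP => i j; rewrite !mxE !ord1 eqxx. Qed.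

Lemma tr_ecol_mul_ecol_neq (i j : nat) : i != j -> (ecol i)^T *m ecol j = 0.
Proof.
move=> neq_ij; apply/matrixP => x y; rewrite !mxE; apply: big1 => a _; rewrite !mxE.
by case: eqP => [-> | _]; rewrite ?mul0r // (negPf neq_ij) mulr0.
Qed.

End StandardBasis.

Lemma mxrank_meval_lsc (K : fieldType) N m p (M : 'M[{mpoly K[N]}]_(m, p))
    (x0 : 'I_N -> K) :
  exists2 q : {mpoly K[N]}, q.@[x0] != 0 &
    forall x, q.@[x] != 0 ->
      (\rank (map_mx (meval x0) M) <= \rank (map_mx (meval x) M))%N.
Proof.
set M0 := map_mx (meval x0) M; set k := \rank M0.
pose L : 'M_(k, m) := pid_mx k *m invmx (col_ebase M0).
pose R : 'M_(p, k) := invmx (row_ebase M0) *m pid_mx k.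
have LM0R : L *m M0 *m R = 1%:M.
  rewrite -{1}(mulmx_ebase M0) /L /R !mulmxA (mulmxKV (col_ebase_unit M0)).
  rewrite (mulmxK (row_ebase_unit M0)) !mul_pid_mx minnn.
  rewrite (minn_idPr (rank_leq_row M0)) minnn (minn_idPr (rank_leq_col M0)).
  exact: pid_mx_1.
pose minor j (L' : 'M_(j, m)) (R' : 'M_(p, j)) :=
  \det (map_mx (@mpolyC N K) L' *m M *m map_mx (@mpolyC N K) R').
have minorE x j (L' : 'M_(j, m)) (R' : 'M_(p, j)) :
    (minor j L' R').@[x] = \det (L' *m map_mx (meval x) M *m R').
  rewrite -det_map_mx !map_mxM -!map_mx_comp.
  by congr (\det (_ *m _ *m _)); apply/matrixP => i i'; rewrite !mxE /= mevalC.
exists (minor k L R) => [|x]; first by rewrite minorE LM0R det1 oner_neq0.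
rewrite minorE -unitfE -unitmxE => /mxrank_unit rank_k.
by rewrite -{1}rank_k; apply: leq_trans (mxrankM_maxl _ _) (mxrankM_maxr _ _).
Qed.

Section CommonKernel.
Variables (K : fieldType) (n d : nat).
Implicit Types (A B : 'I_n -> 'M[K]_d).

Lemma sub_common_kerP m (U : 'M[K]_(m, d)) A :
  reflect (forall i, U *m (A i)^T = 0) (U <= \bigcap_(i < n) kermx (A i)^T)%MS.
Proof.
apply: (iffP sub_bigcapmxP) => [UA i | UA i _]; first exact/sub_kermxP/UA.
exact/sub_kermxP.
Qed.

Lemma mul_common_ker A i : (\bigcap_(j < n) kermx (A j)^T)%MS *m (A i)^T = 0.
Proof. by move/sub_common_kerP: (submx_refl (\bigcap_(j < n) kermx (A j)^T)%MS). Qed.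

Lemma common_ker_dim_conj_le (P : 'M[K]_d) A B :
  P \in unitmx -> (forall i, invmx P *m A i *m P = B i) ->
  (common_ker_dim A <= common_ker_dim B)%N.
Proof.
move=> P_unit AB; have PT_unit : P^T \in unitmx by rewrite unitmx_tr.
have PT_free : row_free (invmx P^T) by rewrite row_free_unit unitmx_inv.
rewrite /common_ker_dim -(mxrankMfree _ PT_free); apply: mxrankS.
apply/sub_common_kerP => i; rewrite -AB !trmx_mul trmx_inv !mulmxA.
by rewrite (mulmxKV PT_unit) mul_common_ker mul0mx.
Qed.

Lemma common_ker_dim_conj (P : 'M[K]_d) A B :
  P \in unitmx -> (forall i, invmx P *m A i *m P = B i) ->
  common_ker_dim B = common_ker_dim A.
Proof.
move=> P_unit AB; apply/eqP.
rewrite eqn_leq (common_ker_dim_conj_le P_unit AB) andbT.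
have Pinv_unit : invmx P \in unitmx by rewrite unitmx_inv.
apply: (common_ker_dim_conj_le Pinv_unit) => i.
by rewrite invmxK -AB !mulmxA mulmxV // mul1mx -mulmxA mulmxV // mulmx1.
Qed.

Definition cat_trmx A : 'M[K]_(d, #|{: 'I_n * 'I_d}|) :=
  \matrix_(a, k) A (enum_val k).1 (enum_val k).2 a.

Definition cat_trmx_poly :
    'M[{mpoly K[#|{: 'I_n * 'I_d * 'I_d}|]}]_(d, #|{: 'I_n * 'I_d}|) :=
  \matrix_(a, k) 'X_(enum_rank ((enum_val k).1, (enum_val k).2, a)).

Lemma map_cat_trmx_poly A :
  map_mx (meval (tuple_coords A)) cat_trmx_poly = cat_trmx A.
Proof. by apply/matrixP => a k; rewrite !mxE mevalXU /tuple_coords enum_rankK. Qed.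

Lemma mul_cat_trmxE m (U : 'M[K]_(m, d)) A p k :
  (U *m cat_trmx A) p k = (U *m (A (enum_val k).1)^T) p (enum_val k).2.
Proof. by rewrite !mxE; apply: eq_bigr => a _; rewrite !mxE. Qed.

Lemma common_ker_dimE A : common_ker_dim A = (d - \rank (cat_trmx A))%N.
Proof.
rewrite /common_ker_dim -mxrank_ker; apply/eqmx_rank/andP; split.
  by apply/sub_kermxP/matrixP => p k; rewrite mul_cat_trmxE mul_common_ker !mxE.
apply/(sub_common_kerP _ A) => i; apply/matrixP => p b.
have := congr1 (fun M : 'M_(d, #|{: 'I_n * 'I_d}|) => M p (enum_rank (i, b)))
               (mulmx_ker (cat_trmx A)).
by rewrite /= mul_cat_trmxE enum_rankK !mxE.
Qed.

End CommonKernel.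

Section Blockform.
Variables (K : fieldType) (n r : nat).
Local Notation blk_cast := (castmx (erefl _, blk_dimE n r)).

Lemma mul_tr_blockform m b c f D (X : 'M[K]_(m, 1)) (Y : 'M_(m, r))
    (Z : 'M_(m, n)) (W : 'M_(m, 1)) :
  blk_cast (row_mx X (row_mx Y (row_mx Z W))) *m (blockform b c f D)^T
  = blk_cast (row_mx (Y *m b + Z *m c) (row_mx (Z *m D^T) (row_mx (W *m f^T) 0))).
Proof.
rewrite /blockform trmx_cast /= mulmx_castmx; congr castmx.
by rewrite !(tr_block_mx, tr_row_mx, trmx0, trmxK, mul_row_block, mul_row_col,
             mul_mx_row, mulmx0, add0r, addr0, row_mx0).
Qed.

Lemma mul_tr_blockform_eq0 m b c f D (X : 'M[K]_(m, 1)) (Y : 'M_(m, r))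
    (Z : 'M_(m, n)) (W : 'M_(m, 1)) :
  blk_cast (row_mx X (row_mx Y (row_mx Z W))) *m (blockform b c f D)^T = 0 <->
  [/\ Y *m b + Z *m c = 0, Z *m D^T = 0 & W *m f^T = 0].
Proof.
rewrite mul_tr_blockform; split=> [/eqP | [-> -> ->]]; last first.
  by rewrite !row_mx0; apply/eqP; rewrite castmx_eq0.
by rewrite castmx_eq0 !row_mx_eq0 => /and4P[/eqP-> /eqP-> /eqP->].
Qed.

Lemma blockform_mul_eq0 b c f D b' c' f' D' :
  b^T *m D' = 0 -> c^T *m f' = 0 -> D *m f' = 0 ->
  blockform b c f D *m blockform b' c' f' D' = 0 :> 'M[K]_(n + r + 2).
Proof.
move=> bD' cf' Df'; apply/eqP; rewrite /blockform mulmx_castmx castmx_eq0; apply/eqP.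
by rewrite !(mulmx_block, mul_row_block, mul_mx_row, mul0mx, mulmx0, add0r, addr0,
             bD', cf', Df', row_mx0, block_mx0).
Qed.

Definition socle_mx m (Q : 'M[K]_(m, r)) : 'M[K]_(1 + m, n + r + 2) :=
  blk_cast (row_mx (col_mx 1 0) (row_mx (col_mx 0 Q) (row_mx 0 0))).

Lemma mxrank_socle_mx m (Q : 'M[K]_(m, r)) : \rank (socle_mx Q) = (1 + \rank Q)%N.
Proof.
rewrite /socle_mx mxrank_castmx row_mx0 -[0 : 'M_(1 + m, n + 1)]col_mx0 -block_mxEh.
by rewrite block_mxEv row_mx0 -block_mxEh rank_diag_block_mx rank_row_mx0 mxrank1.
Qed.

Lemma socle_mx_ker m (Q : 'M[K]_(m, r)) b c f D :
  Q *m b = 0 -> socle_mx Q *m (blockform b c f D)^T = 0.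
Proof.
move=> Qb; apply/mul_tr_blockform_eq0.
by rewrite mul_col_mx Qb !mul0mx col_mx0 addr0.
Qed.

Lemma sub_socle_mx m m' (Q : 'M[K]_(m, r)) (X : 'M_(m', 1)) (Y : 'M_(m', r)) :
  (Y <= Q)%MS ->
  (blk_cast (row_mx X (row_mx Y (row_mx 0 (0 : 'M_(m', 1))))) <= socle_mx Q)%MS.
Proof.
case/submxP=> Y' ->; apply/submxP; exists (row_mx X Y').
rewrite /socle_mx -[row_mx X Y'](castmx_id (erefl m', erefl (1 + m))) mulmx_castmx.
by congr castmx; rewrite !mul_mx_row !mul_row_col !mulmx0 !mulmx1 !addr0 !add0r.
Qed.

End Blockform.

Lemma common_ker_dim_blockform_ge (K : fieldType) n r b c f
    (D : 'I_n -> 'M[K]_(r, n)) :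
  (1 + (r - \rank (\matrix_(i < n) (b i)^T)) <=
     common_ker_dim (fun i => blockform (b i) (c i) (f i) (D i)))%N.
Proof.
set Bt := (\matrix_(i < n) (b i)^T)^T.
rewrite -mxrank_tr -mxrank_ker -(mxrank_socle_mx n (kermx Bt)); apply: mxrankS.
apply/sub_common_kerP => i; apply: socle_mx_ker.
by move: i; apply/mulmx_cols_eq0; apply: mulmx_ker.
Qed.

Lemma common_ker_dim_in_X_ge (K : fieldType) n r s (A : 'I_n -> 'M[K]_(n + r + 2)) :
  in_X s A -> (1 + (r - s) <= common_ker_dim A)%N.
Proof.
case=> _ [P [b [c [f [D [P_unit PAP _ _ <-]]]]]].
by rewrite -(common_ker_dim_conj P_unit PAP) common_ker_dim_blockform_ge.
Qed.

Section Witness.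
Variables (K : fieldType) (n r s : nat).

Definition witness_b (i : 'I_n) : 'cV[K]_r := if (i < s)%N then ecol i else 0.
Definition witness_c (i : 'I_n) : 'cV[K]_n := if (r <= i)%N then ecol i else 0.
Definition witness_D (i : 'I_n) : 'M[K]_(r, n) := ecol i *m (ecol i)^T.
Definition witness (i : 'I_n) : 'M[K]_(n + r + 2) :=
  blockform (witness_b i) (witness_c i) (ecol i) (witness_D i).

Lemma witness_mul_eq0 i j : i != j -> witness i *m witness j = 0.
Proof.
move=> neq_ij; have neq_ij' : (i : nat) != j by [].
apply: blockform_mul_eq0.
- rewrite /witness_b /witness_D; case: ifP => _; last by rewrite trmx0 mul0mx.
  by rewrite mulmxA tr_ecol_mul_ecol_neq // mul0mx.
- rewrite /witness_c; case: ifP => _; last by rewrite trmx0 mul0mx.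
  exact: tr_ecol_mul_ecol_neq.
- by rewrite /witness_D -mulmxA tr_ecol_mul_ecol_neq // mulmx0.
Qed.

Lemma witness_commute i j : witness i *m witness j = witness j *m witness i.
Proof. by have [-> // | neq_ij] := eqVneq i j; rewrite !witness_mul_eq0 // eq_sym. Qed.

Hypotheses (le_sr : (s <= r)%N) (le_rn : (r <= n)%N).

Lemma mxrank_witness_b : \rank (\matrix_(i < n) (witness_b i)^T) = s.
Proof.
have -> : \matrix_(i < n) (witness_b i)^T = pid_mx s.
  apply/matrixP => i a; rewrite !mxE /witness_b.
  by case: ifP => lt_is; rewrite ?mxE ?andbT ?andbF // eq_sym.
by rewrite rank_pid_mx // (leq_trans le_sr).
Qed.

Lemma witness_in_X : in_X s witness.
Proof.
split; first exact: witness_commute.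
exists 1%:M, witness_b, witness_c, (fun i => ecol i), witness_D; split.
- exact: unitmx1.
- by move=> i; rewrite invmx1 mul1mx mulmx1.
- have -> : \matrix_(i < n) (ecol i)^T = 1%:M :> 'M[K]_n.
    by apply/matrixP => i j; rewrite !mxE eq_sym.
  by rewrite row_free_unit unitmx1.
- move=> v Dv0; apply/row_matrixP => a; rewrite row0.
  pose i := widen_ord le_rn a.
  have := congr1 (mulmx (ecol i)^T) (Dv0 i).
  rewrite /witness_D trmx_mul trmxK !mulmxA tr_ecol_mul_ecol mul1mx mulmx0.
  by rewrite -[_ *m v]trmxK trmx_mul trmxK (mulmx_ecol _ a) tr_col trmxK.
- exact: mxrank_witness_b.
Qed.

Hypothesis n_gt0 : (0 < n)%N.

Lemma common_ker_dim_witness_le : (common_ker_dim witness <= 1 + (r - s))%N.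
Proof.
rewrite /common_ker_dim; set U := (\bigcap_(i < n) _)%MS.
set U' := castmx (erefl, esym (blk_dimE n r)) U.
set X := lsubmx U'; set Y := lsubmx (rsubmx U').
set Z := lsubmx (rsubmx (rsubmx U')); set W := rsubmx (rsubmx (rsubmx U')).
have UE : U = castmx (erefl, blk_dimE n r) (row_mx X (row_mx Y (row_mx Z W))).
  by rewrite !hsubmxK castmxKV.
have ker i : [/\ Y *m witness_b i + Z *m witness_c i = 0,
                 Z *m (witness_D i)^T = 0 & W *m (ecol i : 'cV_n)^T = 0].
  by have := mul_common_ker witness i; rewrite -/U UE => /mul_tr_blockform_eq0.
have W0 : W = 0.
  have [_ _ Wf] := ker (Ordinal n_gt0).
  by rewrite -[W]mulmx1 -(tr_ecol_mul_ecol (Ordinal n_gt0)) mulmxA Wf mul0mx.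
have Zcol (k : 'I_n) : Z *m ecol k = 0.
  have [YbZc ZD _] := ker k; case: (ltnP k r) => [lt_kr | le_rk].
    rewrite /witness_D trmx_mul trmxK mulmxA in ZD.
    by rewrite -[Z *m _]mulmx1 -(tr_ecol_mul_ecol (Ordinal lt_kr)) mulmxA ZD mul0mx.
  have ge_ks : (k < s)%N = false by apply/negbTE; rewrite -leqNgt (leq_trans le_sr).
  by rewrite /witness_b /witness_c ge_ks le_rk mulmx0 add0r in YbZc.
have Z0 : Z = 0.
  apply/matrixP => p k; have := congr1 (fun M : 'cV_(n + r + 2) => M p 0) (Zcol k).
  by rewrite mulmx_ecol !mxE.
have Y_ker : (Y <= kermx (\matrix_(i < n) (witness_b i)^T)^T)%MS.
  apply/sub_kermxP/mulmx_cols_eq0 => i.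
  by have [] := ker i; rewrite Z0 mul0mx addr0.
rewrite UE Z0 W0; apply: leq_trans (mxrankS (sub_socle_mx n X Y_ker)) _.
by rewrite mxrank_socle_mx mxrank_ker mxrank_tr mxrank_witness_b.
Qed.

End Witness.

Theorem lemma4p6 (K : closedFieldType) (n r s : nat) :
  [pchar K] =i pred0 ->
  (1 <= s)%N -> (s <= r)%N -> (r <= n)%N ->
  general (@in_X K n r s) (fun A => common_ker_dim A = (r - s + 1)%N).
Proof.
(* The argument does not depend on the characteristic. *)
move=> _ s_gt0 le_sr le_rn.
have n_gt0 : (0 < n)%N by apply: leq_trans le_rn; apply: leq_trans le_sr.
set A0 := @witness K n r s.
have A0_dim : common_ker_dim A0 = (1 + (r - s))%N.
  apply/eqP; rewrite eqn_leq common_ker_dim_witness_le //.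
  exact/common_ker_dim_in_X_ge/witness_in_X.
have [q qA0 q_lsc] :=
  mxrank_meval_lsc (cat_trmx_poly K n (n + r + 2)) (tuple_coords A0).
exists [:: q]; split.
  by exists A0; rewrite /= orbF; split; first exact: witness_in_X.
move=> A XA; rewrite /= orbF => qA; apply/eqP.
rewrite eqn_leq (addnC (r - s)%N) common_ker_dim_in_X_ge // andbT.
by rewrite -A0_dim !common_ker_dimE leq_sub2l // -!map_cat_trmx_poly q_lsc.
Qed.
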